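(* Let $\mathbb{K}$ be a Cantor complete ordered field. Then for every valuation $v$ on $\mathbb{K}$, the metric space $(\mathbb{K},d)$, where $d(a,b)=e^{-v(a-b)}$ is the valuation metric, is spherically complete.
   Context: An ordered field is Cantor complete if every nested (decreasing) sequence of closed intervals $[a_n,b_n]$ has nonempty intersection. A metric space is spherically complete if every nested (decreasing) sequence of closed balls has nonempty intersection. A valuation on an ordered field $\mathbb{K}$ is a map $v:\mathbb{K}\to\mathbb{R}\cup\{\infty\}$ such that for all $x,y$: $v(x)=\infty$ iff $x=0$; $v(xy)=v(x)+v(y)$; $v(x+y)\ge\min\{v(x),v(y)\}$; and $|x|<|y|$ implies $v(x)\ge v(y)$ (with $r\le\infty$, $r+\infty=\infty$). The valuation metric is $d(a,b)=e^{-v(a-b)}$, with $e^{-\infty}=0$. *)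

From HB Require Import structures.
From mathcomp Require Import all_boot all_order all_algebra.
From mathcomp Require Import all_classical all_reals all_analysis.
Set Implicit Arguments. Unset Strict Implicit. Unset Printing Implicit Defensive.
Import Order.TTheory GRing.Theory Num.Theory.
Local Open Scope ring_scope.
Local Open Scope classical_set_scope.

(* An ordered field is a MathComp realFieldType. *)

Definition cantor_complete (K : realFieldType) : Prop :=
  forall a b : nat -> K,
    (forall n, a n <= b n) ->
    (forall n, `[a n.+1, b n.+1] `<=` `[a n, b n]) ->
    \bigcap_n `[a n, b n] !=set0.

(* A valuation v : K -> R ∪ {∞}, with R the real numbers (any realType),
   represented in the extended reals \bar R with the value -oo excluded. *)
Definition is_valuation (K : realFieldType) (R : realType) (v : K -> \bar R) : Prop :=
  [/\ (forall x, v x <> -oo%E),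
      (forall x, v x = +oo%E <-> x = 0),
      (forall x y, v (x * y) = (v x + v y)%E),
      (forall x y, (Order.min (v x) (v y) <= v (x + y)%R)%E)
    & (forall x y, `|x| < `|y| -> (v y <= v x)%E)].

Definition vdist (K : realFieldType) (R : realType) (v : K -> \bar R) (a b : K) : R :=
  match v (a - b) with
  | EFin r => expR (- r)
  | _ => 0
  end.

Definition vcball (K : realFieldType) (R : realType) (v : K -> \bar R) (c : K) (r : R) : set K :=
  [set x | vdist v x c <= r].

Definition spherically_complete (K : realFieldType) (R : realType) (v : K -> \bar R) : Prop :=
  forall (c : nat -> K) (r : nat -> R),
    (forall n, 0 <= r n) ->
    (forall n, vcball v (c n.+1) (r n.+1) `<=` vcball v (c n) (r n)) ->
    \bigcap_n vcball v (c n) (r n) !=set0.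

(* The valuation distance to a centre c is a nonincreasing function of the
   order distance |x - c|, so the closed ball of radius r around c is
   order-convex and sandwiched by order intervals: whenever a closed ball B'
   lies inside a closed ball B and some p in B is missing from B', the interval
   of order radius |p - c'| around the centre c' of B' contains B' and, by the
   ultrametric inequality, is contained in B.  Given a nested sequence of balls,
   either some centre lies in all of them, or such sandwiching intervals can be
   chosen along a subsequence; they are nested, and Cantor completeness gives a
   point in all of them, hence in all the balls. *)
From mathcomp Require Import all_boot all_order all_algebra.
From mathcomp Require Import all_classical all_reals all_analysis.
From mathcomp Require Import lra.
Import Order.TTheory GRing.Theory Num.Theory.
Local Open Scope ring_scope.
Local Open Scope classical_set_scope.

Lemma nonincreasing_setS {T : Type} {B : nat -> set T} {m n : nat} :
  (forall k, B k.+1 `<=` B k) -> (m <= n)%N -> B n `<=` B m.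
Proof.
move=> BS; move: m n; apply: (@homo_leq _ B (fun A A' => A' `<=` A)) => // [A|A2 A1 A3 h21 h32].
- exact: subset_refl.
- exact: subset_trans h32 h21.
Qed.

Lemma cantor_complete_sandwich {K : realFieldType} {B : nat -> set K} :
  cantor_complete K -> (forall n, B n.+1 `<=` B n) ->
  (forall N, exists m a b, [/\ (N < m)%N, a <= b,
     B m `<=` `[a, b] & `[a, b] `<=` B N]) ->
  \bigcap_n B n !=set0.
Proof.
move=> hK BS sandwich.
have /choice[f /all_and4[ltNf le_ab sub_Bf sub_B]] :
    forall N, exists mab : nat * (K * K), [/\ (N < mab.1)%N, mab.2.1 <= mab.2.2,
      B mab.1 `<=` `[mab.2.1, mab.2.2] & `[mab.2.1, mab.2.2] `<=` B N].
  by move=> N; have [m [a [b h]]] := sandwich N; exists (m, (a, b)).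
pose idx k := iter k (fun N => (f N).1) 0%N.
have le_idx k : (k <= idx k)%N.
  by elim: k => // k ih; exact: leq_ltn_trans ih (ltNf (idx k)).
pose a k := (f (idx k)).2.1.
pose b k := (f (idx k)).2.2.
have [x hx] : \bigcap_k `[a k, b k] !=set0.
  apply: hK => [k|k]; first exact: le_ab.
  by apply: subset_trans (sub_Bf (idx k)); exact: sub_B.
exists x => n _.
exact: (nonincreasing_setS BS (le_idx n)) _ (sub_B _ _ (hx n I)).
Qed.

Section ValuationMetric.
Context {K : realFieldType} {R : realType} {v : K -> \bar R}.
Hypothesis v_valuation : is_valuation v.

Lemma v_neqNy x : v x <> -oo%E.
Proof. by case: v_valuation. Qed.

Lemma v0 : v 0 = +oo%E.
Proof. by case: v_valuation => _ /(_ 0) [_ ->]. Qed.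

Lemma v_fin {x} : x != 0 -> exists r, v x = r%:E.
Proof.
case: v_valuation => _ v_eqy _ _ _ x_neq0.
case vx: (v x) => [r| |]; first by exists r.
- by move/v_eqy: vx => /eqP; rewrite (negbTE x_neq0).
- by have := v_neqNy x; rewrite vx.
Qed.

Lemma vM x y : v (x * y) = (v x + v y)%E.
Proof. by case: v_valuation. Qed.

Lemma v_unit_sqr x : x * x = 1 -> v x = 0%E.
Proof.
move=> xx1; have [r vx] : exists r, v x = r%:E.
  apply: v_fin; apply/eqP => x0.
  by move: xx1; rewrite x0 mulr0 => /eqP; rewrite eq_sym oner_eq0.
have [s v1] := v_fin (oner_neq0 K).
have := vM 1 1; rewrite mulr1 v1 -EFinD => -[s0].
have := vM x x; rewrite xx1 v1 vx -EFinD => -[rs].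
by congr EFin; lra.
Qed.

Lemma vN x : v (- x) = v x.
Proof. by rewrite -mulN1r vM v_unit_sqr ?add0e // mulrNN mulr1. Qed.

Lemma v_norm_le {x y} : `|x| <= `|y| -> (v y <= v x)%E.
Proof.
case: v_valuation => _ _ _ _ v_lt.
rewrite le_eqVlt => /orP[/eqP xy|]; last exact: v_lt.
have : `|x| == `|y| by rewrite xy.
by rewrite eqr_norm2 => /orP[] /eqP ->; rewrite ?vN.
Qed.

Lemma vdist_le {a b a' b'} :
  (v (a - b) <= v (a' - b'))%E -> vdist v a' b' <= vdist v a b.
Proof.
rewrite /vdist; have := v_neqNy (a - b); have := v_neqNy (a' - b').
case: (v (a' - b')) => [r'| |] // _; case: (v (a - b)) => [r| |] //= _.
by rewrite lee_fin ler_expR lerN2.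
Qed.

Lemma vdist_sym a b : vdist v a b = vdist v b a.
Proof. by rewrite /vdist -opprB vN. Qed.

Lemma vdist_self a : vdist v a a = 0.
Proof. by rewrite /vdist subrr v0. Qed.

Lemma vdist_ultra {a b c r} :
  vdist v a b <= r -> vdist v b c <= r -> vdist v a c <= r.
Proof.
case: v_valuation => _ _ _ v_min _ hab hbc.
have := v_min (a - b) (b - c); rewrite addrA subrK.
by case: (leP (v (a - b)) (v (b - c))) => _ /vdist_le /le_trans; apply.
Qed.

Lemma vdist_le_norm {x y c} : `|x - c| <= `|y - c| -> vdist v x c <= vdist v y c.
Proof. by move/v_norm_le; exact: vdist_le. Qed.

Lemma vcball_sandwich {c0 r0 c r p} : 0 <= r ->
  vcball v c r `<=` vcball v c0 r0 -> vcball v c0 r0 p -> ~ vcball v c r p ->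
  vcball v c r `<=` `[c - `|p - c|, c + `|p - c|] /\
  `[c - `|p - c|, c + `|p - c|] `<=` vcball v c0 r0.
Proof.
rewrite /vcball /= => r_ge0 sub p_in p_out.
have c_in : vdist v c c0 <= r0 by apply: sub; rewrite /= vdist_self.
split=> x; rewrite /= in_itv /= -ler_distl => hx.
- apply: contra_notT p_out; rewrite -ltNge => lt_px.
  exact: le_trans (vdist_le_norm (ltW lt_px)) hx.
- have p_c : vdist v p c <= r0 by apply: vdist_ultra p_in _; rewrite vdist_sym.
  exact: vdist_ultra (le_trans (vdist_le_norm hx) p_c) c_in.
Qed.

End ValuationMetric.

Theorem theorem2p6 (K : realFieldType) (R : realType) :
  cantor_complete K ->
  forall v : K -> \bar R, is_valuation v -> spherically_complete v.
Proof.
move=> hK v hv c r r_ge0 nested.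
pose B n := vcball v (c n) (r n).
have c_in n : B n (c n) by rewrite /B /vcball /= vdist_self.
have [[N cN_in]|] := pselect (exists N, forall m, B m (c N)).
  by exists (c N) => m _; exact: cN_in.
move=> /forallNP no_common_centre.
apply: (cantor_complete_sandwich hK nested) => N.
have /existsNP[m cN_out] := no_common_centre N.
have ltNm : (N < m)%N.
  rewrite ltnNge; apply: contra_notN cN_out => le_mN.
  exact: (nonincreasing_setS nested le_mN) _ (c_in N).
have [sub_Bm sub_BN] := vcball_sandwich hv (r_ge0 m)
  (nonincreasing_setS nested (ltnW ltNm)) (c_in N) cN_out.
exists m, (c m - `|c N - c m|), (c m + `|c N - c m|); split => //.
by rewrite lerD2l (@le_trans _ _ 0) // oppr_le0.
Qed.
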